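(* Let $1<a_1<a_2$ be coprime integers. For every $r\in\left(0,\frac{a_2}{a_1+a_2}\right)$ there exists $T$ such that if $t\ge T$, then $\mu_t'(r)<-\frac{1}{a_2}$.
   Context: For $t\in[1,\infty)$ and $(u,v)\in\mathbb{R}^2$, $\|(u,v)\|_t=(|u|^t+|v|^t)^{1/t}$. Define $\mu_t(r)=\left\|\left(\frac{1-r}{a_1},\frac{r}{a_2}\right)\right\|_t$ for $r\in[0,1]$; $\mu_t'$ denotes the derivative with respect to $r$. *)

From Stdlib Require Import Reals.
From Coquelicot Require Import Coquelicot.
Open Scope R_scope.

Definition abs_rpow (x t : R) : R :=
  if Req_EM_T x 0 then 0 else Rpower (Rabs x) t.

Definition nonneg_root (s t : R) : R :=
  if Req_EM_T s 0 then 0 else Rpower s (/ t).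

Definition tnorm (t u v : R) : R :=
  nonneg_root (abs_rpow u t + abs_rpow v t) t.

Definition mu (a1 a2 : nat) (t r : R) : R :=
  tnorm t ((1 - r) / INR a1) (r / INR a2).

From Stdlib Require Import Reals Lra Lia.
From Coquelicot Require Import Coquelicot.
Open Scope R_scope.

(* Write u = (1 - r)/a1 and v = r/a2, so that v < u exactly when r < a2/(a1 + a2).
   With N = ||(u, v)||_t, the chain rule gives
   mu_t'(r) = - (u/N)^(t-1) / a1 + (v/N)^(t-1) / a2.
   Since u <= N, (v/N)^(t-1) <= (v/u)^(t-1); and (u/N)^(t-1) >= (u/N)^t = 1/(1 + (v/u)^t)
   >= 1 - (v/u)^t.  Hence mu_t'(r) <= -1/a1 + (1/a1 + 1/a2) (v/u)^(t-1), which drops below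
   -1/a2 as soon as (v/u)^(t-1) < (a2 - a1)/(a2 + a1). *)

Lemma Rpower_pos (x y : R) : 0 < Rpower x y.
Proof. apply exp_pos. Qed.

Lemma Rpower_div (x y z : R) :
  0 < x -> 0 < y -> Rpower (x / y) z = Rpower x z / Rpower y z.
Proof.
  intros hx hy. unfold Rpower, Rdiv.
  rewrite ln_mult, ln_Rinv, Rmult_plus_distr_l, exp_plus, <- exp_Ropp by
    (assumption || now apply Rinv_0_lt_compat).
  f_equal; f_equal; ring.
Qed.

Lemma Rle_Rpower_le1 (e n m : R) : 0 < e <= 1 -> n <= m -> Rpower e m <= Rpower e n.
Proof.
  intros he hnm.
  assert (hln : ln e <= 0) by (rewrite <- ln_1; apply ln_le; lra).
  assert (hexp : m * ln e <= n * ln e) by nra.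
  unfold Rpower. destruct (Rle_lt_or_eq_dec _ _ hexp) as [hlt | ->].
  - left. now apply exp_increasing.
  - now right.
Qed.

Lemma Rpower_lt1_eventually_lt (x eps : R) : 0 < x < 1 -> 0 < eps ->
  exists T, forall s, T <= s -> Rpower x s < eps.
Proof.
  intros hx heps.
  assert (hlnx : ln x < 0) by (rewrite <- ln_1; apply ln_increasing; lra).
  exists (ln eps / ln x + 1). intros s hs.
  rewrite <- (exp_ln eps heps). apply exp_increasing.
  assert (ln eps / ln x * ln x = ln eps) by (field; lra).
  nra.
Qed.

Lemma locally_pos (f : R -> R) (r : R) :
  continuous f r -> 0 < f r -> locally r (fun x => 0 < f x).
Proof. intros hf hr. apply hf. exact (locally_open _ _ (open_gt 0) (fun _ h => h) _ hr). Qed.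

Lemma is_derive_Rpower_comp (f : R -> R) (x y df : R) :
  0 < f x -> is_derive f x df ->
  is_derive (fun z => Rpower (f z) y) x (y * Rpower (f x) (y - 1) * df).
Proof.
  intros hfx hdf.
  replace (y * Rpower (f x) (y - 1) * df) with (scal df (y * Rpower (f x) (y - 1)))
    by (unfold scal; simpl; unfold mult; simpl; ring).
  apply (is_derive_comp (fun s => Rpower s y)); [|exact hdf].
  now apply is_derive_Reals, derivable_pt_lim_power.
Qed.

Lemma tnorm_pos_eq (t u v : R) :
  0 < u -> 0 < v -> tnorm t u v = Rpower (Rpower u t + Rpower v t) (/ t).
Proof.
  intros hu hv.
  pose proof (Rpower_pos u t); pose proof (Rpower_pos v t).
  unfold tnorm, nonneg_root, abs_rpow.
  destruct (Req_EM_T u 0); [lra|].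
  destruct (Req_EM_T v 0); [lra|].
  rewrite !Rabs_pos_eq by lra.
  destruct (Req_EM_T _ 0); [lra|reflexivity].
Qed.

Lemma Rpower_tnorm (t u v : R) : 0 < t -> 0 < u -> 0 < v ->
  Rpower (tnorm t u v) t = Rpower u t + Rpower v t.
Proof.
  intros ht hu hv.
  pose proof (Rpower_pos u t); pose proof (Rpower_pos v t).
  rewrite tnorm_pos_eq, Rpower_mult, Rinv_l, Rpower_1 by lra; lra.
Qed.

Lemma le_tnorm_l (t u v : R) : 0 < t -> 0 < u -> 0 < v -> u <= tnorm t u v.
Proof.
  intros ht hu hv.
  pose proof (Rpower_pos u t); pose proof (Rpower_pos v t).
  rewrite tnorm_pos_eq by assumption.
  rewrite <- (Rpower_1 u hu) at 1. rewrite <- (Rinv_r t), <- Rpower_mult by lra.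
  apply Rle_Rpower_l; [left; now apply Rinv_0_lt_compat | lra].
Qed.

Lemma tnorm_pos (t u v : R) : 0 < t -> 0 < u -> 0 < v -> 0 < tnorm t u v.
Proof. intros. pose proof (le_tnorm_l t u v). lra. Qed.

Lemma Rpower_div_tnorm (t u v w : R) : 0 < t -> 0 < u -> 0 < v -> 0 < w ->
  Rpower (w / tnorm t u v) (t - 1)
  = Rpower w (t - 1) * Rpower (Rpower u t + Rpower v t) (/ t - 1).
Proof.
  intros ht hu hv hw.
  rewrite tnorm_pos_eq, Rpower_div, Rpower_mult by (assumption || apply Rpower_pos).
  replace (/ t - 1) with (- (/ t * (t - 1))) by (field; lra).
  now rewrite Rpower_Ropp.
Qed.

Lemma is_derive_tnorm (u v : R -> R) (t r du dv : R) :
  0 < t -> 0 < u r -> 0 < v r -> is_derive u r du -> is_derive v r dv ->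
  is_derive (fun x => tnorm t (u x) (v x)) r
    (Rpower (u r / tnorm t (u r) (v r)) (t - 1) * du
     + Rpower (v r / tnorm t (u r) (v r)) (t - 1) * dv).
Proof.
  intros ht hu hv hdu hdv.
  assert (hloc : locally r (fun x => 0 < u x /\ 0 < v x)).
  { apply filter_and; apply locally_pos; try assumption;
      apply (@ex_derive_continuous R_AbsRing R_NormedModule); eexists; eassumption. }
  apply (is_derive_ext_loc (fun x => Rpower (Rpower (u x) t + Rpower (v x) t) (/ t))).
  { revert hloc. apply filter_imp. intros x [hux hvx]. symmetry. now apply tnorm_pos_eq. }
  assert (hsum : is_derive (fun x => Rpower (u x) t + Rpower (v x) t) r
                   (t * Rpower (u r) (t - 1) * du + t * Rpower (v r) (t - 1) * dv)).
  { apply (is_derive_plus (fun x => Rpower (u x) t) (fun x => Rpower (v x) t));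
      now apply is_derive_Rpower_comp. }
  pose proof (Rpower_pos (u r) t); pose proof (Rpower_pos (v r) t).
  assert (hnorm := is_derive_Rpower_comp (fun x => Rpower (u x) t + Rpower (v x) t) r (/ t) _
                     ltac:(cbv beta; lra) hsum).
  refine (eq_rect _ (fun d : R => is_derive _ r d) hnorm _ _).
  rewrite !Rpower_div_tnorm by assumption.
  field; lra.
Qed.

Lemma Rpower_div_tnorm_l_ge (t u v : R) : 1 <= t -> 0 < u -> 0 < v ->
  1 - Rpower (v / u) t <= Rpower (u / tnorm t u v) (t - 1).
Proof.
  intros ht hu hv.
  assert (ht0 : 0 < t) by lra.
  pose proof (le_tnorm_l t u v ht0 hu hv) as hle; pose proof (tnorm_pos t u v ht0 hu hv) as hN.
  apply Rle_trans with (Rpower (u / tnorm t u v) t).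
  - rewrite !Rpower_div, Rpower_tnorm by lra.
    generalize (Rpower_pos u t) (Rpower_pos v t).
    generalize (Rpower u t) (Rpower v t). intros a b ha hb.
    replace (a / (a + b)) with (1 - b / a + b * b / (a * (a + b))) by (field; split; lra).
    assert (0 <= b * b / (a * (a + b))).
    { apply Rle_mult_inv_pos; [nra | apply Rmult_lt_0_compat; lra]. }
    lra.
  - apply Rle_Rpower_le1; [split|]; try lra.
    + apply Rdiv_lt_0_compat; lra.
    + apply (Rdiv_le_1 u (tnorm t u v) hN), hle.
Qed.

Lemma Rpower_div_tnorm_r_le (t u v : R) : 1 <= t -> 0 < u -> 0 < v ->
  Rpower (v / tnorm t u v) (t - 1) <= Rpower (v / u) (t - 1).
Proof.
  intros ht hu hv.
  assert (ht0 : 0 < t) by lra.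
  pose proof (le_tnorm_l t u v ht0 hu hv); pose proof (tnorm_pos t u v ht0 hu hv).
  apply Rle_Rpower_l; [lra|split].
  - apply Rdiv_lt_0_compat; lra.
  - apply Rmult_le_compat_l; [lra|]. apply Rinv_le_contravar; lra.
Qed.

Lemma tnorm_gradient_le (p q t u v : R) : 0 < p -> 0 < q -> 1 <= t -> 0 < v <= u ->
  Rpower (u / tnorm t u v) (t - 1) * - / p + Rpower (v / tnorm t u v) (t - 1) * / q
  <= - / p + (/ p + / q) * Rpower (v / u) (t - 1).
Proof.
  intros hp hq ht [hv hvu].
  assert (hvu1 : 0 < v / u <= 1).
  { split; [apply Rdiv_lt_0_compat; lra | apply (Rdiv_le_1 v u); lra]. }
  pose proof (Rpower_div_tnorm_l_ge t u v ht ltac:(lra) hv) as hX.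
  pose proof (Rpower_div_tnorm_r_le t u v ht ltac:(lra) hv) as hY.
  pose proof (Rle_Rpower_le1 (v / u) (t - 1) t hvu1 ltac:(lra)) as hQ.
  set (Q := Rpower (v / u) (t - 1)) in *.
  assert (0 <= (Rpower (u / tnorm t u v) (t - 1) - (1 - Q)) * / p)
    by (apply Rmult_le_pos; [lra | left; now apply Rinv_0_lt_compat]).
  assert (0 <= (Q - Rpower (v / tnorm t u v) (t - 1)) * / q)
    by (apply Rmult_le_pos; [lra | left; now apply Rinv_0_lt_compat]).
  lra.
Qed.

Lemma tnorm_segment_slope_eventually_lt (p q r : R) :
  0 < p < q -> 0 < r -> r < q / (p + q) ->
  exists T, forall t, 1 <= t -> T <= t ->
    exists d, is_derive (fun x => tnorm t ((1 - x) / p) (x / q)) r d /\ d < - / q.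
Proof.
  intros [hp hpq] hr hrpq.
  assert (hrq : r * (p + q) < q).
  { apply Rmult_lt_reg_r with (/ (p + q)); [apply Rinv_0_lt_compat; lra|].
    rewrite Rmult_assoc, Rinv_r by lra. lra. }
  assert (hu : 0 < (1 - r) / p) by (apply Rdiv_lt_0_compat; nra).
  assert (hv : 0 < r / q) by (apply Rdiv_lt_0_compat; lra).
  assert (hvu : r / q < (1 - r) / p).
  { apply Rmult_lt_reg_r with (p * q); [nra|]. field_simplify; lra. }
  assert (hipq : / q < / p) by (apply Rinv_lt_contravar; nra).
  assert (hiq : 0 < / q) by (apply Rinv_0_lt_compat; lra).
  set (eps := (/ p - / q) / (/ p + / q)).
  assert (heps : 0 < eps) by (apply Rdiv_lt_0_compat; lra).
  destruct (Rpower_lt1_eventually_lt (r / q / ((1 - r) / p)) eps) as [T0 hT0]; [|exact heps|].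
  { split; [apply Rdiv_lt_0_compat; lra | apply (Rdiv_lt_1 (r / q) ((1 - r) / p)); lra]. }
  exists (T0 + 1). intros t ht hT.
  eexists; split.
  - apply (is_derive_tnorm (fun x => (1 - x) / p) (fun x => x / q) t r (- / p) (/ q));
      try lra; auto_derive; try easy; field; lra.
  - eapply Rle_lt_trans; [apply tnorm_gradient_le; lra|].
    assert (hsmall := hT0 (t - 1) ltac:(lra)).
    replace (- / q) with (- / p + (/ p + / q) * eps) by (unfold eps; field; lra).
    apply Rplus_lt_compat_l, Rmult_lt_compat_l; lra.
Qed.

Theorem corollary2 (a1 a2 : nat) :
  (1 < a1)%nat -> (a1 < a2)%nat -> Nat.gcd a1 a2 = 1%nat ->
  forall r : R, 0 < r -> r < INR a2 / (INR a1 + INR a2) ->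
  exists T : R, forall t : R, 1 <= t -> T <= t ->
    exists d : R, is_derive (mu a1 a2 t) r d /\ d < - / INR a2.
Proof.
  intros ha1 ha12 _ r hr hra.
  apply tnorm_segment_slope_eventually_lt; try assumption.
  split; [apply (lt_INR 0) | apply lt_INR]; lia.
Qed.
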